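(* Let $\mu,\nu\in\mathcal{P}(\mathcal{X})$, $0<m_1\le m_2<\infty$, $K:\mathcal{X}\times\mathcal{X}\to(0,1]$ measurable with lower decay $l$, and let $(\alpha_1,\tilde\alpha_1)$, $(\alpha_2,\tilde\alpha_2)$ be pairs of tail functions (with $\mu(B_{m_1})>0$, $\nu(B_{m_1})>0$, $\alpha_1,\alpha_2>0$). Assume \begin{align*} &l(m_2)(1-\alpha_1(m_2))-\tilde\alpha_1(m_2)\ge0,\\ &\bar a:=\sup_{r\ge m_1}\big(l(r)\nu(B_r)(1-\alpha_1(r))-\tilde\alpha_1(m_2)\big)>0,\\ &\frac{1+\tilde\alpha_1(m_2)}{\bar a}\,\nu(B_r^{\mathsf c})\le\alpha_2(r)\ \text{ for all } r\ge m_1,\\ &\frac{\tilde\alpha_1(m_2)}{\bar a}\,\nu(B_r^{\mathsf c})\le\tilde\alpha_2(r)\ \text{ for all } r\ge m_2. \end{align*} Then $L_{K,\mu}(\mathcal{F}^{\mu}_{\alpha_1,\tilde\alpha_1})\subseteq\mathcal{F}^{\nu}_{\alpha_2,\tilde\alpha_2}$ and $L_{K^\top,\nu}(\mathcal{G}^{\nu}_{\alpha_2,\tilde\alpha_2})\subseteq\mathcal{G}^{\mu}_{\alpha_1,\tilde\alpha_1}$.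
   Context: $\mathcal{X}$ is a Polish space with metric $d_{\mathcal{X}}$, $x_0$ fixed, $B_r=\{x:d_{\mathcal{X}}(x_0,x)\le r\}$, $B_r^{\mathsf c}=\mathcal{X}\setminus B_r$. A non-increasing $l:[0,\infty)\to[0,\infty)$ is a lower decay of $K$ if $\inf_{x,y\in B_r}K(x,y)\ge l(r)$ for all $r>0$. $K^\top(x,y)=K(y,x)$; $L_{K,\mu}f(x)=\int K(x,y)f(y)\,\mu(dy)$. A tail function is a non-increasing $\alpha:(0,\infty)\to[0,\infty)$ with $\lim_{r\to\infty}\alpha(r)=0$. For $\rho\in\mathcal{P}(\mathcal{X})$: $\mathcal{F}^{\rho}_{\alpha,\tilde\alpha}$ is the set of $f\in L^2(\rho)$ with $f\mathbf 1_{B_{m_2}}\ge0$ $\rho$-a.s., $\int_{B_r^{\mathsf c}}f_+\,d\rho\le\alpha(r)\int f\,d\rho$ for all $r\ge m_1$, $\int_{B_r^{\mathsf c}}f_-\,d\rho\le\tilde\alpha(r)\int f\,d\rho$ for all $r\ge m_2$; $\mathcal{G}^{\rho}_{\alpha,\tilde\alpha}=\{g\in L^2(\rho):\int fg\,d\rho\ge0\ \forall f\in\mathcal{F}^{\rho}_{\alpha,\tilde\alpha}\}$. *)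

From HB Require Import structures.
From mathcomp Require Import all_boot all_order all_algebra.
From mathcomp Require Import all_classical all_reals all_analysis.
Set Implicit Arguments. Unset Strict Implicit. Unset Printing Implicit Defensive.
Import Order.TTheory GRing.Theory Num.Theory.
Import numFieldNormedType.Exports.
Local Open Scope classical_set_scope.
Local Open Scope ring_scope.

Section Defs.
Context {R : realType} {d : measure_display} {X : measurableType d}.

Definition metric_open (dist : X -> X -> R) (A : set X) : Prop :=
  forall x, A x -> exists2 e : R, 0 < e & [set y | dist x y < e] `<=` A.

Definition polish_borel (dist : X -> X -> R) : Prop :=
  [/\ (forall x y, 0 <= dist x y) /\
      (forall x y, dist x y = 0 <-> x = y) /\
      (forall x y, dist x y = dist y x) /\
      (forall x y z, dist x z <= dist x y + dist y z),
   (exists s : nat -> X, forall x (e : R), 0 < e -> exists n, dist x (s n) < e),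
   (forall u : nat -> X,
      (forall e : R, 0 < e -> exists N, forall n m, (N <= n)%N -> (N <= m)%N ->
          dist (u n) (u m) < e) ->
      exists x, (fun n => dist (u n) x) @ \oo --> (0 : R))
   & @measurable d X = <<s metric_open dist >>].

Definition cball (dist : X -> X -> R) (x0 : X) (r : R) : set X :=
  [set x | dist x0 x <= r].

Definition lower_decay (dist : X -> X -> R) (x0 : X) (K : X -> X -> R)
    (l : R -> R) : Prop :=
  (forall r, 0 <= r -> 0 <= l r) /\
  (forall r s, 0 <= r -> r <= s -> l s <= l r) /\
  (forall r, 0 < r -> forall x y, cball dist x0 r x -> cball dist x0 r y ->
     l r <= K x y).

Definition tail_function (a : R -> R) : Prop :=
  (forall r, 0 < r -> 0 <= a r) /\
  (forall r s, 0 < r -> r <= s -> a s <= a r) /\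
  (a r @[r --> +oo] --> (0 : R)).

Definition L2 (rho : {measure set X -> \bar R}) (f : X -> R) : Prop :=
  measurable_fun setT f /\ (\int[rho]_x ((f x) ^+ 2)%:E < +oo)%E.

Definition Lop (K : X -> X -> R) (mu : {measure set X -> \bar R}) (f : X -> R)
    : X -> R :=
  fun x => fine (\int[mu]_y (K x y * f y)%:E).

Definition transp (K : X -> X -> R) : X -> X -> R := fun x y => K y x.

Definition Fcone (dist : X -> X -> R) (x0 : X) (m1 m2 : R)
    (rho : {measure set X -> \bar R}) (a ta : R -> R) : set (X -> R) :=
  [set f | [/\ L2 rho f,
     {ae rho, forall x, cball dist x0 m2 x -> 0 <= f x},
     (forall r, m1 <= r ->
        (\int[rho]_(x in ~` cball dist x0 r) (Num.max (f x) 0)%:E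
          <= (a r)%:E * \int[rho]_x (f x)%:E)%E)
   & (forall r, m2 <= r ->
        (\int[rho]_(x in ~` cball dist x0 r) (Num.max (- f x) 0)%:E
          <= (ta r)%:E * \int[rho]_x (f x)%:E)%E)]].

Definition Gcone (dist : X -> X -> R) (x0 : X) (m1 m2 : R)
    (rho : {measure set X -> \bar R}) (a ta : R -> R) : set (X -> R) :=
  [set g | L2 rho g /\
     forall f, Fcone dist x0 m1 m2 rho a ta f ->
       (0 <= \int[rho]_x (f x * g x)%:E)%E].

Definition abar (dist : X -> X -> R) (x0 : X) (m1 m2 : R)
    (nu : {measure set X -> \bar R}) (l a1 at1 : R -> R) : R :=
  sup [set l r * fine (nu (cball dist x0 r)) * (1 - a1 r) - at1 m2
      | r in [set r | m1 <= r]].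

End Defs.

(* Write I = \int f dmu for f in the cone F^mu; the tail condition at m1, where
   a1 m1 > 0, forces I >= 0. Since f^- vanishes on B_m2, \int f^- dmu <= at1 m2 * I,
   and as 0 <= K <= 1 the function L f = \int K f^+ - \int K f^- satisfies
   -at1 m2 * I <= L f <= (1 + at1 m2) * I everywhere, while on B_r the lower
   decay gives L f >= (l r * (1 - a1 r) - at1 m2) * I. Integrating against the
   probability nu yields \int L f dnu >= abar * I, so the tails of (L f)^+ and
   (L f)^- outside B_r, at most nu(B_r^c) times the pointwise bounds, are
   dominated by a2 r and at2 r times \int L f dnu. The dual inclusion follows
   from the adjoint identity \int f * L_{K^T,nu} g dmu = \int L_{K,mu} f * g dnu
   (Fubini). *)

From HB Require Import structures.
From mathcomp Require Import all_boot all_order all_algebra.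
From mathcomp Require Import all_classical all_reals all_analysis.
From mathcomp Require Import measurable_realfun ring lra.
Set Implicit Arguments. Unset Strict Implicit. Unset Printing Implicit Defensive.
Import Order.TTheory GRing.Theory Num.Theory.
Import numFieldNormedType.Exports.
Local Open Scope classical_set_scope.
Local Open Scope ring_scope.

Section integration_facts.
Context {R : realType} {d : measure_display} {X : measurableType d}.
Implicit Types (D : set X) (f g h : X -> R).

Lemma EFin_Rintegral (mu : {measure set X -> \bar R}) D f :
  measurable D -> mu.-integrable D (EFin \o f) ->
  (\int[mu]_(x in D) (f x)%:E)%E = (\int[mu]_(x in D) f x)%:E.
Proof. by move=> mD /(integrable_fin_num mD)/fineK. Qed.

Lemma integrableS_setT (mu : {measure set X -> \bar R}) D f :
  measurable D -> mu.-integrable setT (EFin \o f) -> mu.-integrable D (EFin \o f).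
Proof. by move=> mD; apply: integrableS. Qed.

Lemma Rintegral_setUv (mu : {measure set X -> \bar R}) D f :
  measurable D -> mu.-integrable setT (EFin \o f) ->
  \int[mu]_x f x = \int[mu]_(x in D) f x + \int[mu]_(x in ~` D) f x.
Proof.
move=> mD intf; rewrite -(setUv D) Rintegral_setU ?setUv //.
- exact: measurableC.
- by rewrite /disj_set setICr.
Qed.

Lemma Rintegral_funrposBneg (mu : {measure set X -> \bar R}) f :
  mu.-integrable setT (EFin \o f) ->
  \int[mu]_x f x = \int[mu]_x f^\+ x - \int[mu]_x f^\- x.
Proof.
move=> intf; rewrite -RintegralB //.
- by apply: eq_Rintegral => x _; rewrite -[in LHS](funrposBneg f).
- exact: integrable_funrpos.
- exact: integrable_funrneg.
Qed.

Lemma Rintegral_le_cst (mu : {finite_measure set X -> \bar R}) D f c :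
  measurable D -> mu.-integrable D (EFin \o f) -> (forall x, D x -> f x <= c) ->
  \int[mu]_(x in D) f x <= c * fine (mu D).
Proof.
move=> mD intf fc; rewrite -Rintegral_cst //.
by apply: le_Rintegral => //; exact: finite_measure_integrable_cst.
Qed.

Lemma cst_le_Rintegral (mu : {finite_measure set X -> \bar R}) D f c :
  measurable D -> mu.-integrable D (EFin \o f) -> (forall x, D x -> c <= f x) ->
  c * fine (mu D) <= \int[mu]_(x in D) f x.
Proof.
move=> mD intf cf; rewrite -Rintegral_cst //.
by apply: le_Rintegral => //; exact: finite_measure_integrable_cst.
Qed.

Lemma L2_integrable (mu : {finite_measure set X -> \bar R}) f :
  L2 mu f -> mu.-integrable setT (EFin \o f).
Proof.
move=> [mf intf2].
have i2 : mu.-integrable setT (fun x => (f x ^+ 2)%:E).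
  apply/integrableP; split; first exact/measurable_EFinP/measurable_funX.
  by under eq_integral do rewrite gee0_abs ?lee_fin ?sqr_ge0 //.
apply: (le_integrable measurableT _ _ (integrableD measurableT
  (finite_measure_integrable_cst mu 1 measurableT) i2)).
- exact/measurable_EFinP.
- move=> x _ /=; rewrite lee_fin (le_trans _ (ler_norm _)) // -real_normK ?num_real //.
  by rewrite expr2; nra.
Qed.

Lemma bounded_L2 (mu : {finite_measure set X -> \bar R}) f (C : R) :
  measurable_fun setT f -> (forall x, `|f x| <= C) -> L2 mu f.
Proof.
move=> mf fC; split => //.
apply: (@le_lt_trans _ _ (\int[mu]_x (cst (C ^+ 2)%:E) x)%E).
  apply: ge0_le_integral => //.
  - by move=> x _; rewrite lee_fin sqr_ge0.
  - exact/measurable_EFinP/measurable_funX.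
  - move=> x _; rewrite lee_fin -real_normK ?num_real //.
    by rewrite lerXn2r ?nnegrE ?(le_trans _ (fC x)).
by rewrite integral_cst // lte_mul_pinfty ?lee_fin ?sqr_ge0 // ltey_eq fin_num_measure.
Qed.

Lemma integrableZl_EFin (mu : {measure set X -> \bar R}) D f k :
  measurable D -> mu.-integrable D (EFin \o f) ->
  mu.-integrable D (EFin \o (fun x => k * f x)).
Proof.
by move=> mD /(integrableZl mD k); apply: eq_integrable => // x _; rewrite /= EFinM.
Qed.

Lemma integrableM_le1 (mu : {measure set X -> \bar R}) h f :
  measurable_fun setT h -> (forall x, `|h x| <= 1) ->
  mu.-integrable setT (EFin \o f) -> mu.-integrable setT (EFin \o (h \* f)).
Proof.
move=> mh h1 intf; apply: (le_integrable measurableT _ _ intf).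
- exact/measurable_EFinP/measurable_funM/measurable_EFinP/(measurable_int mu).
- by move=> x _; rewrite lee_fin /= normrM ler_piMl.
Qed.

Lemma integrable_prodM (mu nu : {finite_measure set X -> \bar R}) f g :
  mu.-integrable setT (EFin \o f) -> nu.-integrable setT (EFin \o g) ->
  (mu \x nu)%E.-integrable setT (fun p : X * X => (f p.1 * g p.2)%:E).
Proof.
move=> intf intg.
have mf : measurable_fun setT f by exact/measurable_EFinP/(measurable_int mu).
have mg : measurable_fun setT g by exact/measurable_EFinP/(measurable_int nu).
apply/integrable12ltyP.
  by apply/measurable_EFinP/measurable_funM; exact: measurableT_comp.
rewrite (eq_integral (fun x => `|(f x)%:E| * \int[nu]_y `|(g y)%:E|)%E); last first.
  move=> x _; rewrite -ge0_integralZl //=; last exact/measurable_EFinP/measurableT_comp.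
  by apply: eq_integral => y _; rewrite normrM EFinM.
have mfE : measurable_fun setT (fun x => `|(f x)%:E|%E).
  exact/measurableT_comp/measurable_EFinP.
rewrite (ge0_integralZr mu measurableT mfE) ?integral_ge0 //.
apply: lte_mul_pinfty; rewrite ?integral_ge0 ?ge0_fin_numE ?integral_ge0 //.
- by case/integrableP: intf.
- by case/integrableP: intg.
Qed.

End integration_facts.

Lemma measurable_cball {R : realType} {d : measure_display} {X : measurableType d}
    (dist : X -> X -> R) x0 r :
  polish_borel dist -> measurable (cball dist x0 r).
Proof.
case=> [[_ [_ [dist_sym dist_tri]]] _ _ borel].
have openC : metric_open dist (~` cball dist x0 r).
  move=> x /negP; rewrite -ltNge => rx.
  exists (dist x0 x - r); first by rewrite subr_gt0.
  move=> y /= xy; apply/negP; rewrite /cball /= -ltNge.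
  by have := dist_tri x0 y x; rewrite (dist_sym y x); lra.
rewrite -[cball _ _ _]setCK; apply: measurableC.
by rewrite borel; exact: sub_sigma_algebra.
Qed.

Section integral_operator.
Context {R : realType} {d : measure_display} {X : measurableType d}.
Variable K : X -> X -> R.
Hypothesis mK : measurable_fun setT (fun p : X * X => K p.1 p.2).
Hypothesis K1 : forall x y, `|K x y| <= 1.

Lemma integrable_kernelM (mu : {measure set X -> \bar R}) f x :
  mu.-integrable setT (EFin \o f) ->
  mu.-integrable setT (EFin \o (fun y => K x y * f y)).
Proof. by apply: integrableM_le1 (K1 x); exact: measurable_fun_pair2 mK. Qed.

Lemma normr_Lop_le (mu : {measure set X -> \bar R}) f x :
  mu.-integrable setT (EFin \o f) -> `|Lop K mu f x| <= \int[mu]_y `|f y|.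
Proof.
move=> intf; change (`|\int[mu]_y (K x y * f y)| <= \int[mu]_y `|f y|).
apply: (le_trans (le_normr_Rintegral measurableT (integrable_kernelM x intf))).
apply: le_Rintegral => //.
- exact/integrable_norm/integrable_kernelM.
- exact: integrable_norm.
- by move=> y _; rewrite normrM ler_piMl.
Qed.

Lemma measurable_Lop (mu : {finite_measure set X -> \bar R}) f :
  mu.-integrable setT (EFin \o f) -> measurable_fun setT (Lop K mu f).
Proof.
move=> intf; have mf : measurable_fun setT f.
  exact/measurable_EFinP/(measurable_int mu).
have intKf : (mu \x mu)%E.-integrable setT
    (fun p : X * X => (K p.1 p.2 * f p.2)%:E).
  have int1f := integrable_prodM (finite_measure_integrable_cst mu 1 measurableT) intf.
  apply: (le_integrable measurableT _ _ int1f).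
  - exact/measurable_EFinP/measurable_funM/measurableT_comp.
  - by move=> p _; rewrite lee_fin /= mul1r normrM ler_piMl.
exact: measurableT_comp (fine_measurable measurableT) (measurable_fubini_F intKf).
Qed.

Lemma L2_Lop (mu nu : {finite_measure set X -> \bar R}) f :
  mu.-integrable setT (EFin \o f) -> L2 nu (Lop K mu f).
Proof.
move=> intf; apply: bounded_L2 => [|x]; [exact: measurable_Lop | exact: normr_Lop_le].
Qed.

Lemma Lop_funrposBneg (mu : {measure set X -> \bar R}) f x :
  mu.-integrable setT (EFin \o f) ->
  Lop K mu f x = \int[mu]_y (K x y * f^\+ y) - \int[mu]_y (K x y * f^\- y).
Proof.
move=> intf; rewrite -RintegralB //.
- by apply: eq_Rintegral => y _; rewrite -mulrBr -[in LHS](funrposBneg f).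
- exact/integrable_kernelM/integrable_funrpos.
- exact/integrable_kernelM/integrable_funrneg.
Qed.

End integral_operator.

Section duality.
Context {R : realType} {d : measure_display} {X : measurableType d}.
Variable K : X -> X -> R.
Hypothesis mK : measurable_fun setT (fun p : X * X => K p.1 p.2).
Hypothesis K1 : forall x y, `|K x y| <= 1.

Let mKT : measurable_fun setT (fun p : X * X => transp K p.1 p.2).
Proof. exact: measurableT_comp mK (@measurable_swap _ _ X X). Qed.

Let KT1 x y : `|transp K x y| <= 1. Proof. exact: K1. Qed.

Lemma Lop_adjoint (mu nu : {finite_measure set X -> \bar R}) f g :
  mu.-integrable setT (EFin \o f) -> nu.-integrable setT (EFin \o g) ->
  (\int[mu]_x (f x * Lop (transp K) nu g x)%:E
    = \int[nu]_y (Lop K mu f y * g y)%:E)%E.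
Proof.
move=> intf intg; pose Phi (p : X * X) := (f p.1 * (K p.2 p.1 * g p.2))%:E.
have intPhi : (mu \x nu)%E.-integrable setT Phi.
  apply: (le_integrable measurableT _ _ (integrable_prodM intf intg)).
    have mf : measurable_fun setT f by exact/measurable_EFinP/(measurable_int mu).
    have mg : measurable_fun setT g by exact/measurable_EFinP/(measurable_int nu).
    apply/measurable_EFinP/measurable_funM; first exact: measurableT_comp.
    by apply: measurable_funM; [exact: mKT | exact: measurableT_comp].
  by move=> p _; rewrite lee_fin /= !normrM ler_wpM2l // ler_piMl.
transitivity (\int[mu]_x \int[nu]_y Phi (x, y))%E.
  apply: eq_integral => x _; rewrite /Phi /=.
  under eq_integral do rewrite EFinM.
  by rewrite integralZl ?EFin_Rintegral -?EFinM //; exact: (integrable_kernelM mKT KT1).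
rewrite (Fubini intPhi); apply: eq_integral => y _; rewrite /Phi /=.
under eq_integral do rewrite mulrA (mulrC (f _)) EFinM.
by rewrite integralZr ?EFin_Rintegral -?EFinM //; exact: (integrable_kernelM mK K1).
Qed.

Lemma Lop_transp_Gcone (dist : X -> X -> R) x0 m1 m2
    (mu nu : {finite_measure set X -> \bar R}) a1 at1 a2 at2 g :
  (forall f, Fcone dist x0 m1 m2 mu a1 at1 f ->
     Fcone dist x0 m1 m2 nu a2 at2 (Lop K mu f)) ->
  Gcone dist x0 m1 m2 nu a2 at2 g ->
  Gcone dist x0 m1 m2 mu a1 at1 (Lop (transp K) nu g).
Proof.
move=> LF [L2g Gg]; have intg := L2_integrable L2g.
split; first exact: (L2_Lop mKT KT1).
move=> f Ff; have [/L2_integrable intf _ _ _] := Ff.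
by rewrite Lop_adjoint //; exact/Gg/LF.
Qed.

End duality.

Lemma ler_mul_rescale {R : realFieldType} (c b t a i j : R) :
  0 < b -> 0 <= c -> 0 <= t -> 0 <= i -> c / b * t <= a -> b * i <= j ->
  c * i * t <= a * j.
Proof.
move=> b_gt0 c_ge0 t_ge0 i_ge0 cta bij.
have a_ge0 : 0 <= a.
  exact: le_trans (mulr_ge0 (divr_ge0 c_ge0 (ltW b_gt0)) t_ge0) cta.
have -> : c * i * t = c / b * t * (b * i) by field; rewrite gt_eqF.
exact: le_trans (ler_wpM2r (mulr_ge0 (ltW b_gt0) i_ge0) cta) (ler_wpM2l a_ge0 bij).
Qed.

Section cone_image.
Context {R : realType} {d : measure_display} {X : measurableType d}.
Variables (dist : X -> X -> R) (x0 : X) (m1 m2 : R).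
Variables (mu : {finite_measure set X -> \bar R}) (nu : probability X R).
Variables (K : X -> X -> R) (l a1 at1 : R -> R).
Local Notation B := (cball dist x0).
Hypothesis mB : forall r, measurable (B r).
Hypotheses (m1_gt0 : 0 < m1) (m1_le_m2 : m1 <= m2).
Hypothesis mK : measurable_fun setT (fun p : X * X => K p.1 p.2).
Hypothesis K01 : forall x y, 0 <= K x y <= 1.
Hypothesis Kl : lower_decay dist x0 K l.
Hypotheses (a1m1_gt0 : 0 < a1 m1) (at1m2_ge0 : 0 <= at1 m2).

Let K1 x y : `|K x y| <= 1.
Proof. by have /andP[K0 ?] := K01 x y; rewrite ger0_norm. Qed.

Lemma Rintegral_kernelM_ge0 D h x :
  (forall y, 0 <= h y) -> 0 <= \int[mu]_(y in D) (K x y * h y).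
Proof.
move=> h_ge0; apply: Rintegral_ge0 => y _.
by have /andP[K0 _] := K01 x y; exact: mulr_ge0.
Qed.

Lemma Rintegral_kernelM_le h x : mu.-integrable setT (EFin \o h) ->
  (forall y, 0 <= h y) -> \int[mu]_y (K x y * h y) <= \int[mu]_y h y.
Proof.
move=> inth h_ge0; apply: le_Rintegral => //; first exact: integrable_kernelM.
by move=> y _; have /andP[_ K_le1] := K01 x y; exact: ler_piMl.
Qed.

Variable f : X -> R.
Hypothesis Ff : Fcone dist x0 m1 m2 mu a1 at1 f.

Local Notation I := (\int[mu]_x f x).

Let intf : mu.-integrable setT (EFin \o f).
Proof. by case: Ff => /L2_integrable. Qed.

Let intfp := integrable_funrpos measurableT intf.
Let intfn := integrable_funrneg measurableT intf.

Lemma Fcone_funrpos_tail r : m1 <= r -> \int[mu]_(x in ~` B r) f^\+ x <= a1 r * I.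
Proof.
move=> m1r; case: Ff => _ _ + _ => /(_ r m1r).
rewrite !EFin_Rintegral -?EFinM ?lee_fin //; first exact: measurableC.
exact: integrableS_setT (measurableC (mB r)) intfp.
Qed.

Lemma Fcone_funrneg_tail r : m2 <= r -> \int[mu]_(x in ~` B r) f^\- x <= at1 r * I.
Proof.
move=> m2r; case: Ff => _ _ _ /(_ r m2r).
rewrite !EFin_Rintegral -?EFinM ?lee_fin //; first exact: measurableC.
exact: integrableS_setT (measurableC (mB r)) intfn.
Qed.

Lemma Fcone_integral_ge0 : 0 <= I.
Proof.
have tail_ge0 : 0 <= \int[mu]_(x in ~` B m1) f^\+ x.
  by apply: Rintegral_ge0 => x _; exact: funrpos_ge0.
by rewrite -(pmulr_rge0 _ a1m1_gt0); exact: le_trans tail_ge0 (Fcone_funrpos_tail _).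
Qed.

Lemma Fcone_integral_funrneg_le : \int[mu]_x f^\- x <= at1 m2 * I.
Proof.
rewrite (Rintegral_setUv (mB m2) intfn).
suff -> : \int[mu]_(x in B m2) f^\- x = 0 by rewrite add0r; exact: Fcone_funrneg_tail.
rewrite /Rintegral (ae_eq_integral (cst 0%E)) ?integral0 //.
- by apply: measurable_funS (measurable_int mu intfn).
- case: Ff => _ f_ge0 _ _; apply: filterS f_ge0 => x fx_ge0 Bx.
  by rewrite /funrneg (max_idPr _) // oppr_le0 fx_ge0.
Qed.

Lemma Lop_Fcone_ge x : - (at1 m2 * I) <= Lop K mu f x.
Proof.
rewrite (Lop_funrposBneg mK K1 x intf).
have := Rintegral_kernelM_ge0 setT x (funrpos_ge0 f).
have := Rintegral_kernelM_le x intfn (funrneg_ge0 f).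
have := Fcone_integral_funrneg_le; lra.
Qed.

Lemma Lop_Fcone_le x : Lop K mu f x <= (1 + at1 m2) * I.
Proof.
rewrite (Lop_funrposBneg mK K1 x intf) mulrDl mul1r.
have := Rintegral_kernelM_le x intfp (funrpos_ge0 f).
have := Rintegral_kernelM_ge0 setT x (funrneg_ge0 f).
have := Rintegral_funrposBneg intf.
have := Fcone_integral_funrneg_le; lra.
Qed.

Lemma Lop_Fcone_ge_cball r x : m1 <= r -> B r x ->
  (l r * (1 - a1 r) - at1 m2) * I <= Lop K mu f x.
Proof.
move=> m1r Brx; have r_gt0 : 0 < r := lt_le_trans m1_gt0 m1r.
have [l_ge0 [_ l_le_K]] := Kl.
have mass_cball : (1 - a1 r) * I <= \int[mu]_(y in B r) f^\+ y.
  have := Rintegral_setUv (mB r) intfp; have := Rintegral_funrposBneg intf.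
  have : 0 <= \int[mu]_y f^\- y by apply: Rintegral_ge0 => y _; exact: funrneg_ge0.
  have := Fcone_funrpos_tail m1r; rewrite mulrBl mul1r; lra.
have lower_cball : l r * \int[mu]_(y in B r) f^\+ y <= \int[mu]_y (K x y * f^\+ y).
  rewrite (Rintegral_setUv (mB r) (integrable_kernelM mK K1 x intfp)).
  apply: ler_wpDr; first by apply: Rintegral_kernelM_ge0; exact: funrpos_ge0.
  rewrite -RintegralZl //; last exact: integrableS_setT.
  apply: le_Rintegral => //.
  - exact/integrableZl_EFin/integrableS_setT.
  - exact/integrableS_setT/integrable_kernelM.
  - by move=> y Bry; apply: ler_wpM2r; [exact: funrpos_ge0 | exact: l_le_K].
rewrite (Lop_funrposBneg mK K1 x intf) mulrBl -mulrA.
have := ler_wpM2l (l_ge0 r (ltW r_gt0)) mass_cball.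
have := Rintegral_kernelM_le x intfn (funrneg_ge0 f).
have := Fcone_integral_funrneg_le; lra.
Qed.

Let intLf : nu.-integrable setT (EFin \o Lop K mu f).
Proof. exact/L2_integrable/(L2_Lop mK K1). Qed.

Local Notation J := (\int[nu]_x Lop K mu f x).

Lemma integral_Lop_Fcone_ge_cball r : m1 <= r ->
  (l r * fine (nu (B r)) * (1 - a1 r) - at1 m2) * I <= J.
Proof.
move=> m1r; have mBC := measurableC (mB r).
have on_cball := cst_le_Rintegral (mB r) (integrableS_setT (mB r) intLf)
  (fun x Brx => Lop_Fcone_ge_cball m1r Brx).
have off_cball := cst_le_Rintegral mBC (integrableS_setT mBC intLf)
  (fun x _ => Lop_Fcone_ge x).
have nuBC : fine (nu (~` B r)) = 1 - fine (nu (B r)).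
  by rewrite probability_setC // fineB ?fin_num_measure.
rewrite (Rintegral_setUv (mB r) intLf); rewrite nuBC in off_cball.
set b := fine (nu (B r)) in on_cball off_cball *.
have -> : (l r * b * (1 - a1 r) - at1 m2) * I
    = (l r * (1 - a1 r) - at1 m2) * I * b + - (at1 m2 * I) * (1 - b) by ring.
lra.
Qed.

Lemma integral_Lop_Fcone_ge : abar dist x0 m1 m2 nu l a1 at1 * I <= J.
Proof.
have [I_gt0|I_le0] := ltrP 0 I; last first.
  have I0 : I = 0 by apply/eqP; rewrite eq_le I_le0 Fcone_integral_ge0.
  by have := integral_Lop_Fcone_ge_cball (lexx m1); rewrite I0 !mulr0.
rewrite -ler_pdivlMr //; apply: ge_sup; first by eexists; exists m1; rewrite /=.
by move=> _ [r m1r <-]; rewrite ler_pdivlMr //; exact: integral_Lop_Fcone_ge_cball.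
Qed.

Lemma Lop_Fcone_funrpos_tail r :
  \int[nu]_(x in ~` B r) (Lop K mu f)^\+ x <= (1 + at1 m2) * I * fine (nu (~` B r)).
Proof.
have mBC := measurableC (mB r).
apply: Rintegral_le_cst => // [|x _].
  exact/(integrableS_setT mBC)/integrable_funrpos.
rewrite /funrpos ge_max Lop_Fcone_le mulr_ge0 ?addr_ge0 //; exact: Fcone_integral_ge0.
Qed.

Lemma Lop_Fcone_funrneg_tail r :
  \int[nu]_(x in ~` B r) (Lop K mu f)^\- x <= at1 m2 * I * fine (nu (~` B r)).
Proof.
have mBC := measurableC (mB r).
apply: Rintegral_le_cst => // [|x _].
  exact/(integrableS_setT mBC)/integrable_funrneg.
rewrite /funrneg ge_max lerNl Lop_Fcone_ge mulr_ge0 //; exact: Fcone_integral_ge0.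
Qed.

Variables (a2 at2 : R -> R).
Hypothesis decay_m2 : 0 <= l m2 * (1 - a1 m2) - at1 m2.
Hypothesis abar_gt0 : 0 < abar dist x0 m1 m2 nu l a1 at1.
Hypothesis a2_tail : forall r, m1 <= r ->
  (1 + at1 m2) / abar dist x0 m1 m2 nu l a1 at1 * fine (nu (~` B r)) <= a2 r.
Hypothesis at2_tail : forall r, m2 <= r ->
  at1 m2 / abar dist x0 m1 m2 nu l a1 at1 * fine (nu (~` B r)) <= at2 r.

Lemma Lop_Fcone : Fcone dist x0 m1 m2 nu a2 at2 (Lop K mu f).
Proof.
have I_ge0 := Fcone_integral_ge0.
have nuBC_ge0 r : 0 <= fine (nu (~` B r)) by rewrite fine_ge0 ?measure_ge0.
split.
- exact: (L2_Lop mK K1).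
- apply: aeW => x Bx; apply: le_trans (Lop_Fcone_ge_cball m1_le_m2 Bx).
  exact: mulr_ge0.
- move=> r m1r; have mBC := measurableC (mB r).
  rewrite (EFin_Rintegral measurableT intLf) EFin_Rintegral //; last first.
    exact/(integrableS_setT mBC)/integrable_funrpos.
  rewrite -EFinM lee_fin; apply: le_trans (Lop_Fcone_funrpos_tail r) _.
  apply: ler_mul_rescale abar_gt0 _ _ I_ge0 (a2_tail m1r) integral_Lop_Fcone_ge => //.
  by rewrite addr_ge0.
- move=> r m2r; have mBC := measurableC (mB r).
  rewrite (EFin_Rintegral measurableT intLf) EFin_Rintegral //; last first.
    exact/(integrableS_setT mBC)/integrable_funrneg.
  rewrite -EFinM lee_fin; apply: le_trans (Lop_Fcone_funrneg_tail r) _.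
  exact: ler_mul_rescale abar_gt0 _ _ I_ge0 (at2_tail m2r) integral_Lop_Fcone_ge.
Qed.

End cone_image.

Theorem proposition4p1 (R : realType) (d : measure_display) (X : measurableType d)
  (dist : X -> X -> R) (x0 : X) (mu nu : probability X R) (m1 m2 : R)
  (K : X -> X -> R) (l a1 at1 a2 at2 : R -> R) :
  polish_borel dist ->
  0 < m1 -> m1 <= m2 ->
  measurable_fun setT (fun p : X * X => K p.1 p.2) ->
  (forall x y, 0 < K x y <= 1) ->
  lower_decay dist x0 K l ->
  tail_function a1 -> tail_function at1 ->
  tail_function a2 -> tail_function at2 ->
  (0 < mu (cball dist x0 m1))%E -> (0 < nu (cball dist x0 m1))%E ->
  (forall r, 0 < r -> 0 < a1 r) -> (forall r, 0 < r -> 0 < a2 r) ->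
  0 <= l m2 * (1 - a1 m2) - at1 m2 ->
  0 < abar dist x0 m1 m2 nu l a1 at1 ->
  (forall r, m1 <= r ->
     (1 + at1 m2) / abar dist x0 m1 m2 nu l a1 at1
       * fine (nu (~` cball dist x0 r)) <= a2 r) ->
  (forall r, m2 <= r ->
     at1 m2 / abar dist x0 m1 m2 nu l a1 at1
       * fine (nu (~` cball dist x0 r)) <= at2 r) ->
  (forall f, Fcone dist x0 m1 m2 mu a1 at1 f ->
     Fcone dist x0 m1 m2 nu a2 at2 (Lop K mu f)) /\
  (forall g, Gcone dist x0 m1 m2 nu a2 at2 g ->
     Gcone dist x0 m1 m2 mu a1 at1 (Lop (transp K) nu g)).
Proof.
move=> polish m1_gt0 m1_le_m2 mK K_bounds Kl _ [at1_ge0 _] _ _ _ _ a1_gt0 _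
  decay_m2 abar_gt0 a2_tail at2_tail.
have K01 x y : 0 <= K x y <= 1 by have /andP[/ltW -> ->] := K_bounds x y.
have K1 x y : `|K x y| <= 1 by have /andP[K0 ?] := K01 x y; rewrite ger0_norm.
have mB r : measurable (cball dist x0 r) by exact: measurable_cball.
have at1m2_ge0 : 0 <= at1 m2 by apply: at1_ge0; exact: lt_le_trans m1_le_m2.
have LF f : Fcone dist x0 m1 m2 mu a1 at1 f ->
    Fcone dist x0 m1 m2 nu a2 at2 (Lop K mu f).
  move=> Ff; have a1m1_gt0 := a1_gt0 _ m1_gt0.
  exact: (Lop_Fcone mB m1_gt0 m1_le_m2 mK K01 Kl a1m1_gt0 at1m2_ge0 Ff
    decay_m2 abar_gt0 a2_tail at2_tail).
by split=> // g; exact: (Lop_transp_Gcone mK K1 LF).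
Qed.
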